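(* Let $S$ be a closed type of system $\mathcal{F}$ which is $\forall^+$ (a type with positive quantifiers) and does not contain the type constant $O$. Then $S$ is an output type: for every normal $\lambda$-term $t$ and every term variable $\alpha$, if $\alpha : O \vdash_{\mathcal F} t : S$, then $\alpha \notin Fv(t)$.
   Context: $\lambda$-terms are those of the untyped $\lambda$-calculus; $(t)u$ denotes application, $Fv(t)$ the set of free variables of $t$, and a term is normal if it contains no $\beta$-redex. Types of system $\mathcal F$ are built from type variables and type constants (atomic types on which one cannot quantify; $O$ is such a constant) with the connectives $\rightarrow$ and $\forall$; only proper types are considered, i.e. in every subformula $\forall X A$ the variable $X$ occurs free in $A$. A type is closed if it has no free type variable. A context is $\Gamma = x_1:A_1,\dots,x_n:A_n$. The judgement $\Gamma \vdash_{\mathcal F} t : A$ is generated by: (ax) $\Gamma \vdash x_i : A_i$; ($\rightarrow_i$) from $\Gamma, x:B \vdash t : C$ infer $\Gamma \vdash \lambda x t : B \rightarrow C$; ($\rightarrow_e$) from $\Gamma \vdash u : B\rightarrow C$ and $\Gamma \vdash v : B$ infer $\Gamma \vdash (u)v : C$; ($\forall_i$) from $\Gamma \vdash t : A$ with $X$ not free in $\Gamma$ infer $\Gamma \vdash t : \forall X A$; ($\forall_e$) from $\Gamma \vdash t : \forall X A$ infer $\Gamma \vdash t : A[C/X]$ for any type $C$. The classes $\forall^+$ and $\forall^-$ are defined by: every type variable is both $\forall^+$ and $\forall^-$; if $A$ is $\forall^+$ (resp. $\forall^-$) and $B$ is $\forall^-$ (resp. $\forall^+$) then $B\rightarrow A$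 is $\forall^+$ (resp. $\forall^-$); if $A$ is $\forall^+$ and $X$ is free in $A$ then $\forall X A$ is $\forall^+$. *)

From Stdlib Require Import Arith List.
Import ListNotations.

(** Type variables use de Bruijn indices ([TVar n]); [All A] binds index 0 in [A].
    Type constants are named by natural numbers ([TCst c]); constants cannot be
    quantified over. *)
Inductive ty : Type :=
| TVar : nat -> ty
| TCst : nat -> ty
| Arr  : ty -> ty -> ty
| All  : ty -> ty.

Definition O_cst : nat := 0.
Definition O : ty := TCst O_cst.

Fixpoint shift (c : nat) (A : ty) : ty :=
  match A with
  | TVar n => if n <? c then TVar n else TVar (S n)
  | TCst k => TCst k
  | Arr B C => Arr (shift c B) (shift c C)
  | All B => All (shift (S c) B)
  end.

(** Capture-avoiding substitution of C for the variable j (variables above j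
    are decremented, since the binder of j disappears). [subst 0 C A] is A[C/X]
    when [All A] is [forall X A]. *)
Fixpoint subst (j : nat) (C : ty) (A : ty) : ty :=
  match A with
  | TVar n => if n =? j then C else if n <? j then TVar n else TVar (pred n)
  | TCst k => TCst k
  | Arr B D => Arr (subst j C B) (subst j C D)
  | All B => All (subst (S j) (shift 0 C) B)
  end.

Fixpoint occurs_free (n : nat) (A : ty) : Prop :=
  match A with
  | TVar m => m = n
  | TCst _ => False
  | Arr B C => occurs_free n B \/ occurs_free n C
  | All B => occurs_free (S n) B
  end.

Definition closed_ty (A : ty) : Prop := forall n, ~ occurs_free n A.

Fixpoint proper (A : ty) : Prop :=
  match A with
  | TVar _ | TCst _ => True
  | Arr B C => proper B /\ proper C
  | All B => occurs_free 0 B /\ proper B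
  end.

Fixpoint contains_cst (c : nat) (A : ty) : Prop :=
  match A with
  | TVar _ => False
  | TCst k => k = c
  | Arr B C => contains_cst c B \/ contains_cst c C
  | All B => contains_cst c B
  end.

Inductive pos : ty -> Prop :=
| pos_var : forall n, pos (TVar n)
| pos_cst : forall c, pos (TCst c)
| pos_arr : forall B A, neg B -> pos A -> pos (Arr B A)
| pos_all : forall A, pos A -> occurs_free 0 A -> pos (All A)
with neg : ty -> Prop :=
| neg_var : forall n, neg (TVar n)
| neg_cst : forall c, neg (TCst c)
| neg_arr : forall B A, pos B -> neg A -> neg (Arr B A).

Inductive term : Type :=
| Var : nat -> term
| Lam : nat -> term -> term
| App : term -> term -> term.   (* App t u = (t)u *)

Fixpoint free_in (x : nat) (t : term) : Prop :=
  match t with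
  | Var y => x = y
  | Lam y u => x <> y /\ free_in x u
  | App u v => free_in x u \/ free_in x v
  end.

Fixpoint normal (t : term) : Prop :=
  match t with
  | Var _ => True
  | Lam _ u => normal u
  | App u v =>
      match u with Lam _ _ => False | _ => True end /\ normal u /\ normal v
  end.

Definition ctx := list (nat * ty).

Fixpoint lookup (G : ctx) (x : nat) : option ty :=
  match G with
  | [] => None
  | (y, A) :: G' => if x =? y then Some A else lookup G' x
  end.

(** Shifting all types of the context (de Bruijn form of "X not free in Gamma"). *)
Definition shift_ctx (G : ctx) : ctx := map (fun p => (fst p, shift 0 (snd p))) G.

Inductive typing : ctx -> term -> ty -> Prop :=
| t_ax : forall G x A, lookup G x = Some A -> typing G (Var x) A
| t_abs : forall G x t B C,
    proper B -> typing ((x, B) :: G) t C -> typing G (Lam x t) (Arr B C)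
| t_app : forall G u v B C,
    typing G u (Arr B C) -> typing G v B -> typing G (App u v) C
| t_gen : forall G t A,
    occurs_free 0 A -> typing (shift_ctx G) t A -> typing G t (All A)
| t_inst : forall G t A C,
    proper C -> typing G t (All A) -> typing G t (subst 0 C A).

(** Induction on the typing derivation of a normal term, which is either an
    abstraction or a neutral term [(x) u1 ... un].  The invariant on contexts is:
    [alpha] is declared of type [O], and every other declaration is [forall^-] and
    free of [O].  A neutral term is typed by a target of the type of its head
    variable; it is never instantiated, since a [forall^-] type has no quantifier
    along its target spine, nor generalized, since the generalized variable would
    occur free in a shifted context type.  Hence [alpha], whose type [O] is not an
    arrow, is never applied, and the arguments of any other head variable receive
    [forall^+] types free of [O], to which the induction hypothesis applies.
    Abstractions at [forall^+] types free of [O] only extend the context with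
    [forall^-] declarations free of [O]. *)

From Stdlib Require Import List Arith Lia.
Import ListNotations.

(** [quants_of_sign true A] ([false]): every quantifier of [A] occurs
    positively (negatively); this is [forall^+] ([forall^-]) without the
    properness side condition. *)
Fixpoint quants_of_sign (b : bool) (A : ty) : Prop :=
  match A with
  | TVar _ | TCst _ => True
  | Arr B C => quants_of_sign (negb b) B /\ quants_of_sign b C
  | All B => b = true /\ quants_of_sign b B
  end.

Lemma pos_neg_quants_of_sign (A : ty) :
  (pos A -> quants_of_sign true A) /\ (neg A -> quants_of_sign false A).
Proof.
  induction A; split; intro H; inversion H; subst; simpl; firstorder.
Qed.

Lemma quants_of_sign_subst (A C : ty) (b : bool) (j : nat) :
  quants_of_sign b (subst j C A) -> quants_of_sign b A.
Proof.
  revert b j C; induction A; simpl; intros b j C H; firstorder eauto.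
Qed.

Lemma quants_of_sign_shift (A : ty) (b : bool) (c : nat) :
  quants_of_sign b A -> quants_of_sign b (shift c A).
Proof.
  revert b c; induction A as [n| |B IHB D IHD|B IHB]; simpl; intros b c H;
    firstorder.
  destruct (n <? c); exact I.
Qed.

Lemma contains_cst_subst (A C : ty) (k j : nat) :
  contains_cst k A -> contains_cst k (subst j C A).
Proof.
  revert j C; induction A; simpl; intros j C H; firstorder.
Qed.

Lemma contains_cst_shift (A : ty) (k c : nat) :
  contains_cst k (shift c A) -> contains_cst k A.
Proof.
  revert c; induction A as [n| |B IHB D IHD|B IHB]; simpl; intros c H;
    firstorder eauto.
  destruct (n <? c); exact H.
Qed.

Lemma not_occurs_free_shift (A : ty) (c : nat) : ~ occurs_free c (shift c A).
Proof.
  revert c; induction A as [n| |B IHB D IHD|B IHB]; simpl; intros c H;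
    firstorder eauto.
  destruct (Nat.ltb_spec n c); simpl in H; lia.
Qed.

Inductive target (A : ty) : ty -> Prop :=
| target_refl : target A A
| target_arr B D : target A D -> target A (Arr B D).

Lemma target_occurs_free (A D : ty) (n : nat) :
  target A D -> occurs_free n A -> occurs_free n D.
Proof. induction 1; simpl; auto. Qed.

Lemma target_contains_cst (A D : ty) (k : nat) :
  target A D -> contains_cst k A -> contains_cst k D.
Proof. induction 1; simpl; auto. Qed.

Lemma target_quants_neg (A D : ty) :
  target A D -> quants_of_sign false D -> quants_of_sign false A.
Proof. induction 1; simpl; tauto. Qed.

Lemma target_cod (B C D : ty) : target (Arr B C) D -> target C D.
Proof.
  induction 1; constructor; [constructor | assumption].
Qed.

Lemma not_target_all_neg (A D : ty) :
  quants_of_sign false D -> ~ target (All A) D.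
Proof.
  intros HD Ht. destruct (target_quants_neg _ _ Ht HD). discriminate.
Qed.

Fixpoint head_var (t : term) : nat :=
  match t with Var x => x | Lam _ u => head_var u | App u _ => head_var u end.

Definition not_abs (t : term) : Prop :=
  match t with Lam _ _ => False | _ => True end.

Definition output_ctx (alpha : nat) (G : ctx) : Prop :=
  lookup G alpha = Some O /\
  forall x D, lookup G x = Some D ->
    quants_of_sign false D /\ (x <> alpha -> ~ contains_cst O_cst D).

Lemma output_ctx_single (alpha : nat) : output_ctx alpha [(alpha, O)].
Proof.
  split; simpl.
  - rewrite Nat.eqb_refl; reflexivity.
  - intros x D. destruct (Nat.eqb_spec x alpha); intro H; inversion H; subst.
    simpl; tauto.
Qed.

Lemma output_ctx_cons (alpha x : nat) (B : ty) (G : ctx) :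
  x <> alpha -> quants_of_sign false B -> ~ contains_cst O_cst B ->
  output_ctx alpha G -> output_ctx alpha ((x, B) :: G).
Proof.
  intros Hx HB HcB [Halpha HG]; split; simpl.
  - destruct (Nat.eqb_spec alpha x); congruence.
  - intros y D. destruct (Nat.eqb_spec y x); [|apply HG].
    intro H; inversion H; subst; auto.
Qed.

Lemma lookup_shift_ctx (G : ctx) (x : nat) :
  lookup (shift_ctx G) x = option_map (shift 0) (lookup G x).
Proof.
  induction G as [|[y B] G IH]; simpl; auto.
  destruct (x =? y); simpl; auto.
Qed.

Lemma output_ctx_shift (alpha : nat) (G : ctx) :
  output_ctx alpha G -> output_ctx alpha (shift_ctx G).
Proof.
  intros [Halpha HG]; split.
  - rewrite lookup_shift_ctx, Halpha; reflexivity.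
  - intros x D H. rewrite lookup_shift_ctx in H.
    destruct (lookup G x) as [D'|] eqn:E; inversion H; subst.
    destruct (HG x D' E) as [HD' HcD']; split.
    + apply quants_of_sign_shift; assumption.
    + intros Hx Hc; apply (HcD' Hx); eapply contains_cst_shift; eauto.
Qed.

Lemma output_ctx_arg_type (alpha x : nat) (G : ctx) (B C D : ty) :
  output_ctx alpha G -> lookup G x = Some D -> target (Arr B C) D ->
  x <> alpha /\ quants_of_sign true B /\ ~ contains_cst O_cst B.
Proof.
  intros [Halpha HG] Hx Ht.
  assert (Hneq : x <> alpha).
  { intros ->. rewrite Halpha in Hx; inversion Hx; subst. inversion Ht. }
  destruct (HG x D Hx) as [HD HcD].
  destruct (target_quants_neg _ _ Ht HD) as [HB _].
  split; [|split]; auto.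
  intro Hc; apply (HcD Hneq); eapply target_contains_cst; [exact Ht | simpl; auto].
Qed.

Lemma output_ctx_normal_typing (alpha : nat) (G : ctx) (t : term) (A : ty) :
  typing G t A -> normal t -> output_ctx alpha G ->
  (quants_of_sign true A -> ~ contains_cst O_cst A -> ~ free_in alpha t) /\
  (not_abs t -> exists D, lookup G (head_var t) = Some D /\ target A D /\
                          (head_var t <> alpha -> ~ free_in alpha t)).
Proof.
  intros Hty; induction Hty as [G x A Hx|G x t B C _ Ht IH|G u v B C Hu IHu Hv IHv
                               |G t A Hocc Ht IH|G t A C _ Ht IH];
    intros Hn HG.
  - split.
    + intros _ Hc Hf; simpl in Hf; subst.
      destruct HG as [Halpha _]; rewrite Halpha in Hx; inversion Hx; subst.
      apply Hc; reflexivity.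
    + intros _; exists A; repeat split; [assumption | constructor |].
      intros Hneq Hf; apply Hneq; symmetry; exact Hf.
  - split; [|simpl; tauto].
    intros [HB HC] Hc [Hneq Hf]; simpl in Hn.
    assert (HcB : ~ contains_cst O_cst B) by (intro; apply Hc; simpl; auto).
    assert (HcC : ~ contains_cst O_cst C) by (intro; apply Hc; simpl; auto).
    apply (proj1 (IH Hn (output_ctx_cons _ _ _ _ (not_eq_sym Hneq) HB HcB HG)));
      assumption.
  - destruct Hn as [Hu_abs [Hnu Hnv]].
    destruct (proj2 (IHu Hnu HG) Hu_abs) as [D [HD [Htarget Hfu]]].
    destruct (output_ctx_arg_type _ _ _ _ _ _ HG HD Htarget) as [Hneq [HB HcB]].
    assert (Hf : ~ free_in alpha (App u v)).
    { intros [Hf|Hf]; [exact (Hfu Hneq Hf) | exact (proj1 (IHv Hnv HG) HB HcB Hf)]. }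
    split; [intros; exact Hf|].
    intros _; exists D; repeat split; [exact HD | eapply target_cod; eauto |].
    intros; exact Hf.
  - destruct (IH Hn (output_ctx_shift _ _ HG)) as [Habs Hneutral]. split.
    + intros [_ HA] Hc; exact (Habs HA Hc).
    + intros Ht_abs; exfalso.
      destruct (Hneutral Ht_abs) as [D [HD [Htarget _]]].
      rewrite lookup_shift_ctx in HD.
      destruct (lookup G (head_var t)) as [D'|]; inversion HD; subst.
      exact (not_occurs_free_shift D' 0 (target_occurs_free _ _ _ Htarget Hocc)).
  - destruct (IH Hn HG) as [Habs Hneutral]. split.
    + intros HA Hc. apply Habs.
      * split; [reflexivity | eapply quants_of_sign_subst; eauto].
      * intro; apply Hc, contains_cst_subst; assumption.
    + intros Ht_abs; exfalso.
      destruct (Hneutral Ht_abs) as [D [HD [Htarget _]]].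
      destruct HG as [_ HG].
      exact (not_target_all_neg _ _ (proj1 (HG _ _ HD)) Htarget).
Qed.

Theorem theorem2p1p7 :
  forall S : ty,
    closed_ty S -> proper S -> pos S -> ~ contains_cst O_cst S ->
    forall (t : term) (alpha : nat),
      normal t -> typing [(alpha, O)] t S -> ~ free_in alpha t.
Proof.
  intros S _ _ HS HcS t alpha Hn Ht.
  apply (proj1 (output_ctx_normal_typing alpha _ _ _ Ht Hn (output_ctx_single alpha))); auto.
  apply pos_neg_quants_of_sign; assumption.
Qed.
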